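(* Let $S=\{s_f^h : f\in\{1,\dots,F\},\ h\in\{1,\dots,H\}\}$ and, for $X\subseteq S$, let $\mathbf{X}(X)\in\{0,1\}^{F\times H}$ be given by $x_{f,h}=1$ iff $s_f^h\in X$. Define the set function $G:2^S\to\mathbb{R}$ by $$G(X)=\sum_{u=1}^U\big(\omega_{0,u}-\bar D_u(\mathbf{X}(X))\big),$$ where, for a placement $\mathbf{X}$, $$\bar D_u=\sum_{j=1}^{|\mathcal{H}(u)|-1}\omega_{(j)_u,u}\sum_{f=1}^F\Big[\prod_{i=1}^{j-1}(1-x_{f,(i)_u})\Big]x_{f,(j)_u}P_f+\omega_{0,u}\sum_{f=1}^F\Big[\prod_{i=1}^{|\mathcal{H}(u)|-1}(1-x_{f,(i)_u})\Big]P_f.$$ Then $G$ is a monotone (nondecreasing) submodular set function.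
   Context: Setting: helpers $\{0,1,\dots,H\}$, where helper $0$ is the base station; users $\{1,\dots,U\}$; files $\{1,\dots,F\}$ with request probabilities $P_f\ge 0$, $\sum_f P_f=1$. A bipartite graph with edge set $\mathcal{E}$ between helpers and users, with $(0,u)\in\mathcal{E}$ for all $u$; $\mathcal{H}(u)=\{h:(h,u)\in\mathcal{E}\}$ (so $0\in\mathcal{H}(u)$). Nonnegative reals $\omega_{h,u}$ (average download time per bit on link $(h,u)$) satisfy $\omega_{0,u}\ge\omega_{h,u}$ for all $(h,u)\in\mathcal{E}$, and $\omega_{h,u}=\omega_\infty$ for $(h,u)\notin\mathcal{E}$, where $\omega_\infty$ is a constant much larger than $\max_u\omega_{0,u}$. For each user $u$, $(j)_u$ denotes the helper in $\mathcal{H}(u)$ with the $j$-th smallest delay $\omega_{(j)_u,u}$, with the ordering chosen so that $(|\mathcal{H}(u)|)_u=0$ (the base station is last). Conventions: an empty product equals $1$, an empty sum equals $0$. Set functions: $G$ is submodular if $G(A\cup\{i\})-G(A)\ge G(B\cup\{i\})-G(B)$ for all $A\subseteq B\subseteq S$ and $i\in S\setminus B$; monotone if $A\subseteq B$ implies $G(A)\le G(B)$. *)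

From mathcomp Require Import all_boot all_order all_algebra.
Set Implicit Arguments. Unset Strict Implicit. Unset Printing Implicit Defensive.
Import Order.TTheory GRing.Theory Num.Theory.
Local Open Scope ring_scope.

Definition set_submodular (R : realDomainType) (S : finType) (G : {set S} -> R) :=
  forall (A B : {set S}) (i : S), A \subset B -> i \notin B ->
    G (i |: B) - G B <= G (i |: A) - G A.

Definition set_monotone (R : realDomainType) (S : finType) (G : {set S} -> R) :=
  forall A B : {set S}, A \subset B -> G A <= G B.

(* Helpers are 'I_H.+1 (0 = base station); S = 'I_F * 'I_H, where the pair
   (f, h') stands for s_f^h with h = h'+1 (i.e. lift ord0 h'). *)
Definition xplace (H F : nat) (X : {set 'I_F * 'I_H}) (f : 'I_F) (h : 'I_H.+1) : bool :=
  if unlift ord0 h is Some h' then (f, h') \in X else false.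

(* Average delay of user u; s = ordered list (j)_u, j = 1..|H(u)| (0-indexed here). *)
Definition Dbar (R : realDomainType) (H U F : nat) (P : 'I_F -> R)
  (omega : 'I_H.+1 -> 'I_U -> R) (s : seq 'I_H.+1) (u : 'I_U)
  (X : {set 'I_F * 'I_H}) : R :=
  let x f h := ((xplace X f h : nat)%:R : R) in
  \sum_(j < (size s).-1)
     omega (nth ord0 s j) u *
     \sum_(f < F) (\prod_(i < j) (1 - x f (nth ord0 s i))) * x f (nth ord0 s j) * P f
  + omega ord0 u *
     \sum_(f < F) (\prod_(i < (size s).-1) (1 - x f (nth ord0 s i))) * P f.

Definition Gfun (R : realDomainType) (H U F : nat) (P : 'I_F -> R)
  (omega : 'I_H.+1 -> 'I_U -> R) (ordh : 'I_U -> seq 'I_H.+1)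
  (X : {set 'I_F * 'I_H}) : R :=
  \sum_(u < U) (omega ord0 u - Dbar P omega (ordh u) u X).

(* For a file f, the delay user u sees is the delay of the first helper in its
   sorted list (j)_u that caches f, or omega_{0,u} if none does: the products
   in Dbar are exactly the indicators of "helper (j)_u is the first one holding
   f".  Caching more can only move that first hit earlier, hence to a cheaper
   helper (monotonicity).  The gain of adding one item is the drop from the
   current first hit to the new item; a larger placement has an earlier (cheaper)
   current first hit, so the drop is smaller (submodularity).  Both properties
   are preserved by the nonnegative combination over files and users. *)
From mathcomp Require Import all_boot all_order all_algebra.
Import Order.TTheory GRing.Theory Num.Theory.
Set Implicit Arguments.
Unset Strict Implicit.
Unset Printing Implicit Defensive.
Local Open Scope ring_scope.

Definition first_cost (T V : Type) (w : T -> V) (d : V) (c : pred T) (t : seq T) : V :=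
  nth d (map w t) (find c t).

Lemma first_cost_cons (T V : Type) (w : T -> V) d c a t :
  first_cost w d c (a :: t) = if c a then w a else first_cost w d c t.
Proof. by rewrite /first_cost /=; case: (c a). Qed.

Lemma eq_first_cost (T V : Type) (w : T -> V) d (c1 c2 : pred T) t :
  c1 =1 c2 -> first_cost w d c1 t = first_cost w d c2 t.
Proof. by move=> eq_c; rewrite /first_cost (eq_find eq_c). Qed.

Lemma first_cost_as_sum (R : nzRingType) (T : Type) (w : T -> R) (d : R) (c : pred T) x0 t :
  let x h := (c h)%:R : R in
  \sum_(j < size t) w (nth x0 t j) * ((\prod_(i < j) (1 - x (nth x0 t i))) * x (nth x0 t j))
  + d * \prod_(i < size t) (1 - x (nth x0 t i)) = first_cost w d c t.
Proof.
move=> x; elim: t => [|a t IH]; first by rewrite !big_ord0 add0r mulr1.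
rewrite first_cost_cons /= big_ord_recl [X in _ + _ * X]big_ord_recl /= big_ord0 mul1r /x.
case ca: (c a) => /=.
  rewrite mulr1n subrr big1 ?mul0r ?mulr0 ?addr0 ?mulr1 // => j _.
  by rewrite big_ord_recl /= ca mulr1n subrr !mul0r mulr0.
rewrite subr0 mulr0 add0r mul1r -IH; congr (_ + _).
by apply: eq_bigr => j _; rewrite big_ord_recl /= ca subr0 mul1r.
Qed.

Section FirstCostOrder.

Variables (R : realDomainType) (T : Type) (w : T -> R) (d : R).

Lemma first_cost_ge m c t :
  m <= d -> (forall x, x \in map w t -> m <= x) -> m <= first_cost w d c t.
Proof.
move=> m_le_d m_le_t; rewrite /first_cost.
case: (ltnP (find c t) (size (map w t))) => [lt_k | le_k]; last by rewrite nth_default.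
exact/m_le_t/mem_nth.
Qed.

Lemma first_cost_mono (cA cB : pred T) t :
  sorted (fun a b => w a <= w b) t -> all (fun x => w x <= d) t -> subpred cA cB ->
  first_cost w d cB t <= first_cost w d cA t.
Proof.
move=> + + sub_AB; elim: t => [|a t IH] sorted_at //= /andP[le_ad le_td].
rewrite !first_cost_cons.
case: (boolP (cA a)) => [/sub_AB -> //| _].
case: (cB a); last exact: IH (path_sorted sorted_at) le_td.
apply: (first_cost_ge _ le_ad); apply/allP; rewrite all_map.
have le_trans_w : transitive (fun a b => w a <= w b) by move=> ? ? ?; exact: le_trans.
exact: order_path_min le_trans_w sorted_at.
Qed.

Lemma first_cost_submod (p cA cB : pred T) t :
  sorted (fun a b => w a <= w b) t -> all (fun x => w x <= d) t -> subpred cA cB ->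
  first_cost w d cB t - first_cost w d (fun h => p h || cB h) t
  <= first_cost w d cA t - first_cost w d (fun h => p h || cA h) t.
Proof.
move=> + + sub_AB; elim: t => [|a t IH] sorted_at le_atd; first by rewrite !subrr.
have sorted_t := path_sorted sorted_at.
have /andP[_ le_td] := le_atd.
rewrite !first_cost_cons.
case: (boolP (cA a)) => [cAa | ncAa]; first by rewrite (sub_AB _ cAa) !orbT.
case: (boolP (cB a)) => _; rewrite ?orbT ?orbF.
  rewrite subrr subr_ge0.
  have := first_cost_mono (cA := cA) (cB := fun h => p h || cA h) sorted_at le_atd.
  by rewrite !first_cost_cons (negbTE ncAa) orbF; apply=> h ->; rewrite orbT.
case: (p a); last exact: IH.
by rewrite lerD2r first_cost_mono.
Qed.

End FirstCostOrder.

Lemma xplaceU (H F : nat) (A B : {set 'I_F * 'I_H}) f h :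
  xplace (A :|: B) f h = xplace A f h || xplace B f h.
Proof. by rewrite /xplace; case: (unlift ord0 h) => // h'; rewrite inE. Qed.

Lemma xplaceS (H F : nat) (A B : {set 'I_F * 'I_H}) f :
  A \subset B -> subpred (xplace A f) (xplace B f).
Proof. by move=> /subsetP sAB h; rewrite /xplace; case: (unlift ord0 h) => // h'; apply: sAB. Qed.

(* The last entry of [s] (the base station) only enters Dbar through the
   default value [omega ord0 u], hence the prefix [take (size s).-1 s]. *)
Lemma Dbar_first_cost (R : realDomainType) (H U F : nat) (P : 'I_F -> R)
    (omega : 'I_H.+1 -> 'I_U -> R) (s : seq 'I_H.+1) (u : 'I_U) (X : {set 'I_F * 'I_H}) :
  Dbar P omega s u X = \sum_(f < F) P f *
    first_cost (omega^~ u) (omega ord0 u) (xplace X f) (take (size s).-1 s).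
Proof.
rewrite /Dbar; set n := (size s).-1; set t := take n s.
have size_t : size t = n by rewrite size_takel // leq_pred.
have nth_t i : (i < n)%N -> nth ord0 t i = nth ord0 s i by move=> lt_in; rewrite nth_take.
have prod_t f j : (j <= n)%N ->
    \prod_(i < j) (1 - (xplace X f (nth ord0 t i))%:R) =
    \prod_(i < j) (1 - (xplace X f (nth ord0 s i))%:R) :> R.
  by move=> le_jn; apply: eq_bigr => i _; rewrite nth_t // (leq_trans (ltn_ord i)).
under [RHS]eq_bigr => f _ do rewrite -(first_cost_as_sum _ _ _ ord0) size_t mulrDr mulr_sumr.
rewrite big_split /= exchange_big /= mulr_sumr; congr (_ + _).
  apply: eq_bigr => j _; rewrite mulr_sumr; apply: eq_bigr => f _.
  by rewrite (prod_t _ _ (ltnW (ltn_ord j))) nth_t // [RHS]mulrC mulrA.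
by apply: eq_bigr => f _; rewrite prod_t // [RHS]mulrC mulrA.
Qed.

Lemma GfunB (R : realDomainType) (H U F : nat) (P : 'I_F -> R)
    (omega : 'I_H.+1 -> 'I_U -> R) (ordh : 'I_U -> seq 'I_H.+1) (Y Z : {set 'I_F * 'I_H}) :
  Gfun P omega ordh Y - Gfun P omega ordh Z =
  \sum_(u < U) (Dbar P omega (ordh u) u Z - Dbar P omega (ordh u) u Y).
Proof. by rewrite /Gfun -sumrB; apply: eq_bigr => u _; rewrite opprB addrC addrA subrK. Qed.

Theorem mainTheorem3 (R : realFieldType) (H U F : nat)
  (P : 'I_F -> R)
  (hP0 : forall f, 0 <= P f)
  (hP1 : \sum_(f < F) P f = 1)
  (E : 'I_H.+1 -> 'I_U -> bool)
  (hE0 : forall u, E ord0 u)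
  (omega : 'I_H.+1 -> 'I_U -> R) (omega_inf : R)
  (homega_nonneg : forall h u, E h u -> 0 <= omega h u)
  (homega_base : forall h u, E h u -> omega h u <= omega ord0 u)
  (homega_inf : forall h u, ~~ E h u -> omega h u = omega_inf)
  (homega_inf_large : forall u, omega ord0 u < omega_inf)
  (ordh : 'I_U -> seq 'I_H.+1)
  (hord_uniq : forall u, uniq (ordh u))
  (hord_mem : forall u h, (h \in ordh u) = E h u)
  (hord_sorted : forall u, sorted (fun a b => omega a u <= omega b u) (ordh u))
  (hord_last : forall u, last ord0 (ordh u) = ord0) :
  set_monotone (Gfun P omega ordh) /\ set_submodular (Gfun P omega ordh).
Proof.
pose t u := take (size (ordh u)).-1 (ordh u).
have sorted_t u : sorted (fun a b => omega a u <= omega b u) (t u) by exact: take_sorted.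
have le_base_t u : all (fun h => omega h u <= omega ord0 u) (t u).
  by apply/allP => h /mem_take; rewrite hord_mem; apply: homega_base.
split=> [A B sAB | A B i sAB _].
  apply: ler_sum => u _; rewrite lerD2l lerN2 !Dbar_first_cost.
  apply: ler_sum => f _; apply: ler_wpM2l => //.
  exact: first_cost_mono (sorted_t u) (le_base_t u) (xplaceS sAB).
rewrite !GfunB; apply: ler_sum => u _.
rewrite !Dbar_first_cost -!sumrB; apply: ler_sum => f _.
rewrite -!mulrBr; apply: ler_wpM2l => //.
have xplaceU1 X : xplace (i |: X) f =1 (fun h => xplace [set i] f h || xplace X f h).
  by move=> h; apply: xplaceU.
rewrite !(eq_first_cost _ _ _ (xplaceU1 _)).
exact: first_cost_submod (sorted_t u) (le_base_t u) (xplaceS sAB).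
Qed.
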